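(* Let $\kappa$ be a regular infinite cardinal, $I$ a nonempty set, $(S,\Sigma_S)$ a $\kappa$-measurable space separating points. Let $\underline M=\langle M,\Sigma,(T_i)_{i\in I},\theta\rangle$ and $\underline N=\langle N,\Sigma^N,(T_i^N)_{i\in I},\theta^N\rangle$ be $\kappa$-type spaces on $S$ for player set $I$ and $f:M\to N$ a type morphism. Then for all $m\in M$, $D(f(m))=D(m)$, i.e., for every $\kappa$-expression $\varphi$, $f(m)\in\varphi^{\underline N}$ iff $m\in\varphi^{\underline M}$.
   Context: A $\kappa$-field on a nonempty set is a field closed under intersections of fewer than $\kappa$ members. $\Delta^\kappa(M,\Sigma)$: finitely additive probability measures on $(M,\Sigma)$ with the $\kappa$-field generated by $\{\mu:\mu(E)\ge p\}$. ''Separating points'': for $s\neq s'$ in $S$ some $E\in\Sigma_S$ contains $s$ but not $s'$. A $\kappa$-type space on $S$ for $I$ is $\langle M,\Sigma,(T_i)_{i\in I},\theta\rangle$ with $\Sigma$ a $\kappa$-field on nonempty $M$, each $T_i:M\to\Delta^\kappa(M,\Sigma)$ measurable with: $\{m':T_i(m')=T_i(m)\}\subseteq A\in\Sigma$ implies $T_i(m)(A)=1$; and $\theta:M\to S$ measurable. A type morphism $f:M\to N$ is measurable with $\theta(m)=\theta^N(f(m))$ and $T_i^N(f(m))(E)=T_i(m)(f^{-1}(E))$ for all $m$, $E\in\Sigma^N$, $i$. $\kappa$-expressions: least set containing each $E\in\Sigma_S$ and closed under $\neg$, $B_i^p$ ($i\in I$, $p\in[0,1]$), and conjunctions of fewer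 than $\kappa$ (nonempty) expressions. Semantics: $E^{\underline M}=\theta^{-1}(E)$, complement, $(B_i^p\varphi)^{\underline M}=\{m:T_i(m)(\varphi^{\underline M})\ge p\}$, intersection. $D(m)=\{\varphi:m\in\varphi^{\underline M}\}$. *)

From Stdlib Require Import Reals.
Open Scope R_scope.
Set Implicit Arguments.

Definition le_card (A B : Type) : Prop := exists f : A -> B, forall x y, f x = f y -> x = y.
Definition lt_card (A B : Type) : Prop := le_card A B /\ ~ le_card B A.

(* The cardinal kappa is |K|. *)
Definition infinite_card (K : Type) : Prop := le_card nat K.
Definition regular_card (K : Type) : Prop :=
  forall (J : Type) (X : J -> Type),
    lt_card J K -> (forall j, lt_card (X j) K) -> lt_card {j : J & X j} K.

Definition kfield_closed (K M : Type) (Sig : (M -> Prop) -> Prop) : Prop :=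
  Sig (fun _ => True) /\
  (forall E, Sig E -> Sig (fun m => ~ E m)) /\
  (forall (J : Type) (F : J -> M -> Prop),
      lt_card J K -> (forall j, Sig (F j)) -> Sig (fun m => forall j, F j m)).

Definition kfield (K M : Type) (Sig : (M -> Prop) -> Prop) : Prop :=
  inhabited M /\ kfield_closed K Sig.

Definition gen_kfield (K X : Type) (G : (X -> Prop) -> Prop) : (X -> Prop) -> Prop :=
  fun B => forall F : (X -> Prop) -> Prop, kfield_closed K F -> (forall A, G A -> F A) -> F B.

Definition measurable_map (A B : Type) (SA : (A -> Prop) -> Prop) (SB : (B -> Prop) -> Prop)
  (f : A -> B) : Prop := forall E, SB E -> SA (fun a => E (f a)).

Definition separates_points (S : Type) (SigS : (S -> Prop) -> Prop) : Prop :=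
  forall s s' : S, s <> s' -> exists E, SigS E /\ E s /\ ~ E s'.

(* It is represented as a
   function on all subsets which is 0 outside Sig, so that it is determined by
   its values on Sig (equality of measures = agreement on Sig). *)
Definition is_fapm (M : Type) (Sig : (M -> Prop) -> Prop) (mu : (M -> Prop) -> R) : Prop :=
  (forall E, ~ Sig E -> mu E = 0) /\
  (forall E, Sig E -> 0 <= mu E) /\
  mu (fun _ => True) = 1 /\
  (forall E F, Sig E -> Sig F -> (forall m, E m -> F m -> False) ->
     mu (fun m => E m \/ F m) = mu E + mu F).

Definition DeltaK (M : Type) (Sig : (M -> Prop) -> Prop) : Type := { mu | is_fapm Sig mu }.

Definition Delta_field (K M : Type) (Sig : (M -> Prop) -> Prop) : (DeltaK Sig -> Prop) -> Prop :=
  gen_kfield K (fun B : DeltaK Sig -> Prop =>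
    exists E p, Sig E /\ 0 <= p <= 1 /\ B = (fun mu => proj1_sig mu E >= p)).

Definition is_type_space (K S I M : Type) (SigS : (S -> Prop) -> Prop)
  (Sig : (M -> Prop) -> Prop) (T : I -> M -> DeltaK Sig) (theta : M -> S) : Prop :=
  kfield K Sig /\
  (forall i, measurable_map Sig (@Delta_field K M Sig) (T i)) /\
  (forall i m A, Sig A -> (forall m', T i m' = T i m -> A m') -> proj1_sig (T i m) A = 1) /\
  measurable_map Sig SigS theta.

Definition is_type_morphism (S I M N : Type)
  (Sig : (M -> Prop) -> Prop) (T : I -> M -> DeltaK Sig) (theta : M -> S)
  (SigN : (N -> Prop) -> Prop) (TN : I -> N -> DeltaK SigN) (thetaN : N -> S)
  (f : M -> N) : Prop :=
  measurable_map Sig SigN f /\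
  (forall m, theta m = thetaN (f m)) /\
  (forall i m E, SigN E -> proj1_sig (TN i (f m)) E = proj1_sig (T i m) (fun x => E (f x))).

Inductive expr (K S I : Type) (SigS : (S -> Prop) -> Prop) : Type :=
| EAtom (E : S -> Prop) (HE : SigS E)
| ENeg (phi : expr K I SigS)
| EBel (i : I) (p : R) (Hp : 0 <= p <= 1) (phi : expr K I SigS)
| EConj (A : K -> Prop) (HA : (exists k, A k) /\ lt_card {k | A k} K)
        (phi : K -> expr K I SigS).

Fixpoint sem (K S I M : Type) (SigS : (S -> Prop) -> Prop)
  (Sig : (M -> Prop) -> Prop) (T : I -> M -> DeltaK Sig) (theta : M -> S)
  (e : expr K I SigS) : M -> Prop :=
  match e with
  | @EAtom _ _ _ _ E _ => fun m => E (theta m)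
  | @ENeg _ _ _ _ phi => fun m => ~ sem T theta phi m
  | @EBel _ _ _ _ i p _ phi => fun m => proj1_sig (T i m) (sem T theta phi) >= p
  | @EConj _ _ _ _ A _ phi => fun m => forall k, A k -> sem T theta (phi k) m
  end.

From Stdlib Require Import Reals.
From Stdlib Require Import FunctionalExtensionality PropExtensionality.

(* The only real case is belief: the morphism
   condition transports T^N_i(f m)(phi^N) to T_i(m)(f^-1(phi^N)), which needs
   phi^N to be measurable (truth sets of a type space always are), and
   f^-1(phi^N) = phi^M by the induction hypothesis. *)

Lemma pred_ext {M : Type} {A B : M -> Prop} : (forall m, A m <-> B m) -> A = B.
Proof.
  intro H. apply functional_extensionality; intro m.
  apply propositional_extensionality; apply H.
Qed.

Lemma sem_measurable {K S I M : Type} {SigS : (S -> Prop) -> Prop}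
  {Sig : (M -> Prop) -> Prop} {T : I -> M -> DeltaK Sig} {theta : M -> S} :
  kfield_closed K Sig ->
  (forall i, measurable_map Sig (@Delta_field K M Sig) (T i)) ->
  measurable_map Sig SigS theta ->
  forall phi : expr K I SigS, Sig (sem T theta phi).
Proof.
  intros [_ [HC HI]] HT Htheta.
  induction phi as [E HE|phi IH|i p Hp phi IH|A HA phi IH]; simpl.
  - exact (Htheta E HE).
  - exact (HC _ IH).
  - apply (HT i (fun mu => proj1_sig mu (sem T theta phi) >= p)).
    intros F _ Hgen. apply Hgen. exists (sem T theta phi), p. auto.
  - assert (Hconj : (fun m => forall j : {k | A k}, sem T theta (phi (proj1_sig j)) m)
                    = (fun m => forall k, A k -> sem T theta (phi k) m)).
    { apply pred_ext; intro m; split.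
      - intros H k Hk. exact (H (exist _ k Hk)).
      - intros H [k Hk]. exact (H k Hk). }
    rewrite <- Hconj. apply HI; [apply HA | intros [k Hk]; apply IH].
Qed.

Lemma type_space_sem_measurable {K S I M : Type} {SigS : (S -> Prop) -> Prop}
  {Sig : (M -> Prop) -> Prop} {T : I -> M -> DeltaK Sig} {theta : M -> S} :
  is_type_space K SigS T theta -> forall phi : expr K I SigS, Sig (sem T theta phi).
Proof.
  intros [[_ Hfield] [HT [_ Htheta]]]. exact (sem_measurable Hfield HT Htheta).
Qed.

Lemma sem_type_morphism {K S I M N : Type} {SigS : (S -> Prop) -> Prop}
  {Sig : (M -> Prop) -> Prop} {T : I -> M -> DeltaK Sig} {theta : M -> S}
  {SigN : (N -> Prop) -> Prop} {TN : I -> N -> DeltaK SigN} {thetaN : N -> S}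
  {f : M -> N} :
  is_type_morphism T theta TN thetaN f ->
  (forall phi : expr K I SigS, SigN (sem TN thetaN phi)) ->
  forall (phi : expr K I SigS) (m : M), sem TN thetaN phi (f m) <-> sem T theta phi m.
Proof.
  intros [_ [Htheta HTf]] HmeasN phi.
  induction phi as [E HE|phi IH|i p Hp phi IH|A HA phi IH]; intro m; simpl.
  - rewrite Htheta. reflexivity.
  - rewrite IH. reflexivity.
  - rewrite (HTf i m _ (HmeasN phi)), (pred_ext IH). reflexivity.
  - split; intros H k Hk; apply IH; auto.
Qed.

Theorem proposition2
  (K : Type) (Hinf : infinite_card K) (Hreg : regular_card K)
  (I : Type) (HI : inhabited I)
  (S : Type) (SigS : (S -> Prop) -> Prop) (HS : kfield K SigS) (Hsep : separates_points SigS)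
  (M : Type) (Sig : (M -> Prop) -> Prop) (T : I -> M -> DeltaK Sig) (theta : M -> S)
  (HM : is_type_space K SigS T theta)
  (N : Type) (SigN : (N -> Prop) -> Prop) (TN : I -> N -> DeltaK SigN) (thetaN : N -> S)
  (HN : is_type_space K SigS TN thetaN)
  (f : M -> N) (Hf : is_type_morphism T theta TN thetaN f) :
  forall (m : M) (phi : expr K I SigS), sem TN thetaN phi (f m) <-> sem T theta phi m.
Proof.
  intros m phi.
  exact (sem_type_morphism Hf (type_space_sem_measurable HN) phi m).
Qed.
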